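(* Let $\pi:\mathbb R^n\times[0,\infty]\to[0,\infty]$ be a price function such that there is a function $f:\mathbb R^n\to[0,\infty)$ with $\pi(\mathbf q,v)=f(\mathbf q)^2/v$ for all $\mathbf q\in\mathbb R^n$, $v\in[0,\infty]$. Then $\pi$ is arbitrage-free if and only if $f$ is a semi-norm, i.e. $f(c\mathbf q)=|c|f(\mathbf q)$ for all $c\in\mathbb R$, $\mathbf q\in\mathbb R^n$, and $f(\mathbf q_1+\mathbf q_2)\le f(\mathbf q_1)+f(\mathbf q_2)$ for all $\mathbf q_1,\mathbf q_2\in\mathbb R^n$.
   Context: Conventions: $a/0=\infty$ for $a>0$, $0/0=0$, $a/\infty=0$, and $0\cdot\infty=0$. A query is a pair $(\mathbf q,v)$ with $\mathbf q\in\mathbb R^n$ and $v\in[0,\infty]$. The determinacy relation $\mathbf S\rightarrow\mathbf Q$ between finite multisets of queries and queries is the smallest relation satisfying: (Summation) for every $k\ge 0$, $\{(\mathbf q_1,v_1),\ldots,(\mathbf q_k,v_k)\}\rightarrow(\mathbf q_1+\cdots+\mathbf q_k,\,v_1+\cdots+v_k)$; (Scalar multiplication) for every $c\in\mathbb R$, $\{(\mathbf q,v)\}\rightarrow(c\mathbf q,c^2v)$; (Relaxation) $\{(\mathbf q,v)\}\rightarrow(\mathbf q,v')$ whenever $v\le v'$; (Transitivity) if $\mathbf S_1\rightarrow\mathbf Q_1,\ldots,\mathbf S_k\rightarrow\mathbf Q_k$ and $\{\mathbf Q_1,\ldots,\mathbf Q_k\}\rightarrow\mathbf Q$, then $\mathbf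 S_1\uplus\cdots\uplus\mathbf S_k\rightarrow\mathbf Q$. A price function $\pi$ is arbitrage-free if for every $m\ge 1$ and queries $\mathbf Q_1,\ldots,\mathbf Q_m,\mathbf Q$ with $\{\mathbf Q_1,\ldots,\mathbf Q_m\}\rightarrow\mathbf Q$ we have $\pi(\mathbf Q)\le\sum_{i=1}^m\pi(\mathbf Q_i)$. *)

From Stdlib Require Import List Permutation.
From HB Require Import structures.
From mathcomp Require Import all_boot all_order all_algebra.
From mathcomp Require Import boolp reals ereal Rstruct.
Set Implicit Arguments. Unset Strict Implicit. Unset Printing Implicit Defensive.
Import Order.TTheory GRing.Theory Num.Theory.
Local Open Scope ring_scope.
Local Open Scope ereal_scope.

Notation R := Rdefinitions.R.

Record query (n : nat) := Query {
  qv : 'rV[R]_n;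
  qval : \bar R;
  qval_ge0 : 0 <= qval }.

(* Division on [0,oo] with the conventions a/0 = oo (a>0), 0/0 = 0, a/oo = 0. *)
Definition ediv (a b : \bar R) : \bar R :=
  match b with
  | EFin r => if r == 0%R then (if a == 0 then 0 else +oo) else a * (r^-1)%:E
  | _ => 0
  end.

(* Determinacy relation between finite multisets (lists up to permutation)
   of queries and queries: the smallest relation closed under the four rules. *)
Inductive determines (n : nat) : seq (query n) -> query n -> Prop :=
| det_sum (Qs : seq (query n)) (Q : query n) :
    qv Q = (\sum_(x <- Qs) qv x)%R ->
    qval Q = \sum_(x <- Qs) qval x ->
    determines Qs Q
| det_scale (Q Q' : query n) (c : R) :
    qv Q' = c *: qv Q ->
    qval Q' = (c ^+ 2)%:E * qval Q ->
    determines [:: Q] Q'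
| det_relax (Q Q' : query n) :
    qv Q' = qv Q -> qval Q <= qval Q' ->
    determines [:: Q] Q'
| det_trans (ps : seq (seq (query n) * query n)) (S : seq (query n)) (Q : query n) :
    (forall p, List.In p ps -> determines p.1 p.2) ->
    determines (map snd ps) Q ->
    Permutation S (flatten (map fst ps)) ->
    determines S Q.

Definition arbitrage_free (n : nat) (pi : 'rV[R]_n -> \bar R -> \bar R) : Prop :=
  forall (Qs : seq (query n)) (Q : query n),
    (0 < size Qs)%N -> determines Qs Q ->
    pi (qv Q) (qval Q) <= \sum_(x <- Qs) pi (qv x) (qval x).

Definition seminorm (n : nat) (f : 'rV[R]_n -> R) : Prop :=
  (forall (c : R) (q : 'rV[R]_n), f (c *: q) = (`|c| * f q)%R) /\
  (forall q1 q2 : 'rV[R]_n, (f (q1 + q2) <= f q1 + f q2)%R).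

From Stdlib Require Import List Permutation.
From mathcomp Require Import all_boot all_order all_algebra.
From mathcomp Require Import ereal Rstruct ring.
Set Implicit Arguments. Unset Strict Implicit.
Import Order.TTheory GRing.Theory Num.Theory.
Local Open Scope ring_scope.
Local Open Scope ereal_scope.

(* Each determinacy rule respects the price f(q)^2 / v when f is a seminorm:
   for summation this is subadditivity of f followed by the Cauchy-Schwarz
   inequality (a + b)^2 / (r + s) <= a^2 / r + b^2 / s; scaling by c multiplies
   both f(q)^2 and v by c^2; relaxation only lowers the price.  Conversely,
   (q, 1) determines (c q, c^2), which forces f (c q) <= |c| f q, hence
   homogeneity (apply it again with c^-1); and {(q1, f q1), (q2, f q2)}, priced
   f q1 + f q2, determines (q1 + q2, f q1 + f q2), which forces the triangle
   inequality. *)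

Lemma ediv_ge0 (x : R) (v : \bar R) : (0 <= x)%R -> 0 <= v -> 0 <= ediv x%:E v.
Proof.
case: v => [r||] //= x_ge0 r_ge0.
case: eqP => _; first by case: eqP => _ //; rewrite leey.
by apply: mule_ge0; rewrite lee_fin // invr_ge0 -lee_fin.
Qed.

Lemma ediv0e (v : \bar R) : ediv 0%:E v = 0.
Proof. by case: v => [r||] //=; case: eqP => _; rewrite ?eqxx ?mul0e. Qed.

Lemma ediv_gt0 (x r : R) : (0 < r)%R -> ediv x%:E r%:E = (x / r)%:E.
Proof. by move=> r_gt0 /=; rewrite gt_eqF. Qed.

Lemma edive0 (x : R) : x != 0%R -> ediv x%:E 0 = +oo.
Proof. by move=> x_neq0 /=; rewrite eqxx eqe (negbTE x_neq0). Qed.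

Lemma ediv_sqr_id (x : R) : (0 <= x)%R -> ediv (x ^+ 2)%:E x%:E = x%:E.
Proof.
move=> x_ge0; have [->|x_neq0] := eqVneq x 0%R; first by rewrite expr0n ediv0e.
by rewrite ediv_gt0 ?lt_def ?x_neq0 // expr2 mulfK.
Qed.

Lemma ediv_le_den (x : R) (v v' : \bar R) : (0 <= x)%R -> 0 <= v -> v <= v' ->
  ediv x%:E v' <= ediv x%:E v.
Proof.
move=> x_ge0 v_ge0 le_vv'; have v'_ge0 := le_trans v_ge0 le_vv'.
case: v' le_vv' v'_ge0 => [r'||] le_vv' r'_ge0 //; last exact: ediv_ge0.
case: v v_ge0 le_vv' => [r||] r_ge0 le_rr' //.
rewrite lee_fin in r_ge0 le_rr'.
have [->|x_neq0] := eqVneq x 0%R; first by rewrite !ediv0e.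
have [->|r_neq0] := eqVneq r 0%R; first by rewrite edive0 ?leey.
have r_gt0 : (0 < r)%R by rewrite lt_def r_neq0.
rewrite !ediv_gt0 ?(lt_le_trans r_gt0) // lee_fin ler_wpM2l //.
by rewrite lef_pV2 ?posrE ?(lt_le_trans r_gt0).
Qed.

Lemma ediv_le_num (x x' : R) (v : \bar R) : (0 <= x)%R -> (x <= x')%R -> 0 <= v ->
  ediv x%:E v <= ediv x'%:E v.
Proof.
move=> x_ge0 le_xx'; case: v => [r||] // r_ge0; rewrite lee_fin in r_ge0.
have [->|r_neq0] := eqVneq r 0%R; last first.
  have r_gt0 : (0 < r)%R by rewrite lt_def r_neq0.
  by rewrite !ediv_gt0 // lee_fin ler_wpM2r // invr_ge0 ltW.
have [x0|x_neq0] := eqVneq x 0%R; first by rewrite x0 ediv0e ediv_ge0 // -x0.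
by rewrite !edive0 // gt_eqF // (lt_le_trans _ le_xx') // lt_def x_neq0.
Qed.

Lemma ediv_sqrM (c x : R) (v : \bar R) : c != 0%R -> 0 <= v ->
  ediv (c ^+ 2 * x)%:E ((c ^+ 2)%:E * v) = ediv x%:E v.
Proof.
move=> c_neq0 v_ge0; have c2_gt0 : (0 < c ^+ 2)%R by rewrite exprn_even_gt0.
case: v v_ge0 => [r||] // _; last by rewrite gt0_muley.
rewrite -EFinM /= mulf_eq0 (gt_eqF c2_gt0) /= !eqe mulf_eq0 (gt_eqF c2_gt0) /=.
case: eqP => // /eqP r_neq0; rewrite -!EFinM; congr EFin; field.
by rewrite r_neq0 c_neq0.
Qed.

Lemma sqrD_div_le (a b r s : R) : (0 < r)%R -> (0 < s)%R ->
  ((a + b) ^+ 2 / (r + s) <= a ^+ 2 / r + b ^+ 2 / s)%R.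
Proof.
move=> r_gt0 s_gt0; rewrite -subr_ge0.
have -> : (a ^+ 2 / r + b ^+ 2 / s - (a + b) ^+ 2 / (r + s) =
           (a * s - b * r) ^+ 2 / (r * s * (r + s)))%R.
  by field; rewrite !gt_eqF ?addr_gt0.
by rewrite divr_ge0 ?sqr_ge0 // ltW // !mulr_gt0 // addr_gt0.
Qed.

Lemma ediv_sqrD_le (a b : R) (v w : \bar R) :
  (0 <= a)%R -> (0 <= b)%R -> 0 <= v -> 0 <= w ->
  ediv ((a + b) ^+ 2)%:E (v + w) <= ediv (a ^+ 2)%:E v + ediv (b ^+ 2)%:E w.
Proof.
move=> a_ge0 b_ge0 v_ge0 w_ge0.
have ediv_sqr_ge0 x (u : \bar R) : 0 <= u -> 0 <= ediv (x ^+ 2)%:E u.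
  by move=> u_ge0; rewrite ediv_ge0 ?sqr_ge0.
have ge0_neqNy (u : \bar R) : 0 <= u -> u != -oo.
  by move=> u_ge0; rewrite -ltNye (lt_le_trans ltNy0).
have [->|a_neq0] := eqVneq a 0%R.
  rewrite add0r expr0n ediv0e add0e ediv_le_den ?sqr_ge0 //; exact: leeDr.
have [->|b_neq0] := eqVneq b 0%R.
  rewrite addr0 expr0n ediv0e adde0 ediv_le_den ?sqr_ge0 //; exact: leeDl.
case: v v_ge0 => [r||] r_ge0 //; last first.
  by rewrite addye ?ge0_neqNy // adde_ge0 ?ediv_sqr_ge0.
case: w w_ge0 => [s||] s_ge0 //; last by rewrite addey // adde_ge0 ?ediv_sqr_ge0.
have [->|r_neq0] := eqVneq r 0%R.
  by rewrite edive0 ?sqrf_eq0 // addye ?leey // ge0_neqNy ?ediv_sqr_ge0.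
have [->|s_neq0] := eqVneq s 0%R.
  by rewrite (@edive0 (b ^+ 2)%R) ?sqrf_eq0 // addey ?leey // ge0_neqNy ?ediv_sqr_ge0.
rewrite lee_fin in r_ge0 s_ge0.
have r_gt0 : (0 < r)%R by rewrite lt_def r_neq0.
have s_gt0 : (0 < s)%R by rewrite lt_def s_neq0.
by rewrite -EFinD !ediv_gt0 ?addr_gt0 // -EFinD lee_fin sqrD_div_le.
Qed.

Lemma ediv_sqr_le (y t b : R) : (0 <= t)%R ->
  ediv (y ^+ 2)%:E t%:E <= b%:E -> (y ^+ 2 <= t * b)%R.
Proof.
move=> t_ge0; have [->|t_neq0] := eqVneq t 0%R.
  have [->|y_neq0] := eqVneq y 0%R; first by rewrite expr0n mul0r.
  by rewrite edive0 ?sqrf_eq0 // leye_eq.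
have t_gt0 : (0 < t)%R by rewrite lt_def t_neq0.
by rewrite ediv_gt0 // lee_fin ler_pdivrMr // [(b * t)%R]mulrC.
Qed.

Lemma big_Permutation (T I : Type) (idx : T) (op : Monoid.com_law idx)
    (F : I -> T) (s s' : seq I) :
  Permutation s s' -> \big[op/idx]_(x <- s) F x = \big[op/idx]_(x <- s') F x.
Proof.
elim=> [|x l l' _ IH|x y l|l l' l'' _ IH1 _ IH2]; rewrite ?big_cons //.
- by rewrite IH.
- by rewrite Monoid.mulmCA.
- by rewrite IH1 IH2.
Qed.

Lemma lee_sum_In (I : Type) (F G : I -> \bar R) (s : seq I) :
  (forall x, List.In x s -> F x <= G x) -> \sum_(x <- s) F x <= \sum_(x <- s) G x.
Proof.
elim: s => [|x s IH] le_FG; rewrite ?big_nil ?big_cons //.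
by rewrite leeD ?le_FG ?IH //; [left | move=> y s_y; apply: le_FG; right].
Qed.

Lemma ediv_sqr_sum_le (I : Type) (a : I -> R) (v : I -> \bar R) (s : seq I) :
  (forall x, 0 <= a x)%R -> (forall x, 0 <= v x) ->
  ediv ((\sum_(x <- s) a x) ^+ 2)%:E (\sum_(x <- s) v x)
    <= \sum_(x <- s) ediv (a x ^+ 2)%:E (v x).
Proof.
move=> a_ge0 v_ge0; elim: s => [|x s IH]; first by rewrite !big_nil expr0n ediv0e.
rewrite !big_cons; apply: le_trans (leeD2l _ IH).
by rewrite ediv_sqrD_le ?sumr_ge0 ?sume_ge0.
Qed.

Lemma eq_arbitrage_free (n : nat) (pi pi' : 'rV[R]_n -> \bar R -> \bar R) :
  (forall q v, 0 <= v -> pi q v = pi' q v) ->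
  arbitrage_free pi <-> arbitrage_free pi'.
Proof.
move=> eq_pi; have eq_price (Q : query n) : pi (qv Q) (qval Q) = pi' (qv Q) (qval Q).
  exact: eq_pi (qval_ge0 Q).
split=> af Qs Q Qs_gt0 SQ; have := af Qs Q Qs_gt0 SQ;
  by rewrite (eq_bigr _ (fun x _ => eq_price x)) eq_price.
Qed.

Definition quadratic_price {n : nat} (f : 'rV[R]_n -> R) (q : 'rV[R]_n) (v : \bar R)
  : \bar R := ediv (f q ^+ 2)%:E v.

Section SeminormArbitrageFree.
Variables (n : nat) (f : 'rV[R]_n -> R).
Hypotheses (f_ge0 : forall q, (0 <= f q)%R) (f_seminorm : seminorm f).

Local Notation price := (quadratic_price f).

Lemma seminorm0 : f 0%R = 0%R.
Proof. by have := f_seminorm.1 0%R (0 : 'rV[R]_n)%R; rewrite scale0r normr0 mul0r. Qed.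

Lemma seminorm_sum (I : Type) (q : I -> 'rV[R]_n) (s : seq I) :
  (f (\sum_(x <- s) q x) <= \sum_(x <- s) f (q x))%R.
Proof.
elim: s => [|x s IH]; first by rewrite !big_nil seminorm0.
by rewrite !big_cons (le_trans (f_seminorm.2 _ _)) // lerD2l.
Qed.

Lemma quadratic_price_sum_le (Qs : seq (query n)) :
  price (\sum_(x <- Qs) qv x) (\sum_(x <- Qs) qval x)
    <= \sum_(x <- Qs) price (qv x) (qval x).
Proof.
apply: le_trans (ediv_sqr_sum_le Qs (fun x => f_ge0 (qv x)) (@qval_ge0 n)).
rewrite ediv_le_num ?sqr_ge0 ?sume_ge0 // => [|x _]; last exact: qval_ge0.
by rewrite ler_sqr ?nnegrE ?sumr_ge0 // seminorm_sum.
Qed.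

Lemma quadratic_price_scale (c : R) (q : 'rV[R]_n) (v : \bar R) : 0 <= v ->
  price (c *: q) ((c ^+ 2)%:E * v) <= price q v.
Proof.
move=> v_ge0; rewrite /quadratic_price f_seminorm.1 exprMn real_normK ?num_real //.
have [->|c_neq0] := eqVneq c 0%R; last by rewrite ediv_sqrM.
by rewrite expr0n mul0r ediv0e ediv_ge0 ?sqr_ge0.
Qed.

Lemma determines_price_le S Q :
  determines S Q -> price (qv Q) (qval Q) <= \sum_(x <- S) price (qv x) (qval x).
Proof.
elim=> {S Q} [Qs Q -> -> | Q Q' c -> -> | Q Q' -> le_v | ps S Q _ IHps _ IHQ perm_S].
- exact: quadratic_price_sum_le.
- by rewrite big_seq1 quadratic_price_scale ?qval_ge0.
- by rewrite big_seq1 ediv_le_den ?sqr_ge0 ?qval_ge0.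
- apply: le_trans IHQ _.
  rewrite big_map (big_Permutation _ _ perm_S) big_flatten big_map.
  exact: lee_sum_In.
Qed.

Lemma seminorm_arbitrage_free : arbitrage_free price.
Proof. by move=> Qs Q _; apply: determines_price_le. Qed.

End SeminormArbitrageFree.

Section ArbitrageFreeSeminorm.
Variables (n : nat) (f : 'rV[R]_n -> R).
Hypotheses (f_ge0 : forall q, (0 <= f q)%R)
  (price_arbitrage_free : arbitrage_free (quadratic_price f)).

Lemma arbitrage_free_scale_le (c : R) (q : 'rV[R]_n) : (f (c *: q) <= `|c| * f q)%R.
Proof.
have one_ge0 : (0 : \bar R) <= 1%:E by rewrite lee_fin.
have c2_ge0 : (0 : \bar R) <= (c ^+ 2)%:E * 1%:E by rewrite mule1 lee_fin sqr_ge0.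
have := @price_arbitrage_free [:: _] _ isT
  (@det_scale n (Query q one_ge0) (Query (c *: q) c2_ge0) c erefl erefl).
rewrite big_seq1 /quadratic_price; cbn [qv qval].
rewrite mule1 (@ediv_gt0 _ 1%R) ?ltr01 // divr1.
move=> /(ediv_sqr_le (sqr_ge0 c)) le_sqr.
by rewrite -ler_sqr ?nnegrE ?mulr_ge0 // exprMn real_normK ?num_real.
Qed.

Lemma arbitrage_free_scale (c : R) (q : 'rV[R]_n) : f (c *: q) = (`|c| * f q)%R.
Proof.
apply/eqP; rewrite eq_le arbitrage_free_scale_le /=.
have [->|c_neq0] := eqVneq c 0%R; first by rewrite normr0 mul0r.
have := @arbitrage_free_scale_le c^-1%R (c *: q).
rewrite scalerA mulVf // scale1r normrV ?unitfE // -(@ler_pM2l _ `|c|) ?normr_gt0 //.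
by rewrite mulrA divff ?normr_eq0 // mul1r.
Qed.

Lemma arbitrage_free_subadditive (q1 q2 : 'rV[R]_n) : (f (q1 + q2) <= f q1 + f q2)%R.
Proof.
have f1_ge0 : (0 : \bar R) <= (f q1)%:E by rewrite lee_fin.
have f2_ge0 : (0 : \bar R) <= (f q2)%:E by rewrite lee_fin.
have f12_ge0 := adde_ge0 f1_ge0 f2_ge0.
pose Qs := [:: Query q1 f1_ge0; Query q2 f2_ge0].
have Qs_sum : determines Qs (Query (q1 + q2) f12_ge0).
  by apply: det_sum; rewrite /= !big_cons big_nil ?addr0 ?adde0.
have := @price_arbitrage_free Qs _ isT Qs_sum.
rewrite !big_cons big_nil adde0 /quadratic_price; cbn [qv qval].
rewrite !ediv_sqr_id // -EFinD => /(ediv_sqr_le (addr_ge0 (f_ge0 q1) (f_ge0 q2))).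
by rewrite -expr2 ler_sqr ?nnegrE ?addr_ge0.
Qed.

Lemma arbitrage_free_seminorm : seminorm f.
Proof. by split; [exact: arbitrage_free_scale | exact: arbitrage_free_subadditive]. Qed.

End ArbitrageFreeSeminorm.

Theorem theorem1 (n : nat) (pi : 'rV[R]_n -> \bar R -> \bar R) (f : 'rV[R]_n -> R)
  (f_ge0 : forall q, (0 <= f q)%R)
  (hpi : forall q (v : \bar R), 0 <= v -> pi q v = ediv ((f q ^+ 2)%:E) v) :
  arbitrage_free pi <-> seminorm f.
Proof.
apply: iff_trans (eq_arbitrage_free hpi) _.
by split; [exact: arbitrage_free_seminorm | exact: seminorm_arbitrage_free].
Qed.
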